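(* Let $m\ge 2$. The bulk checks together with the horizontal and vertical boundary checks defined in the context, viewed as indicator vectors in $\mathbb{F}_2^{2^m}$, are linearly independent over $\mathbb{F}_2$ and are exactly $2^m-m-1$ in number. Consequently the code $uRM(m)$ they define has length $2^m$ and dimension $m+1$.
   Context: Let $a=\lceil m/2\rceil$ and $b=\lfloor m/2\rfloor$. Place $2^m$ bits on a grid with $2^b$ rows and $2^a$ columns, positions $(i,j)$, row $1$ on top, column $1$ leftmost. Bulk checks: for every $1\le i<2^b$, $1\le j<2^a$, the set $\{(i,j),(i+1,j),(i,j+1),(i+1,j+1)\}$. Boundary checks: for a line of $L=2^n$ positions labelled $1,\dots,L$, each $s\in\{1,\dots,n-1\}$, $w=2^s$, and each integer $t$ with $-L/(2w)+1\le t\le L/(2w)-1$, let $S(w,t)=\{L/2-w/2+wt,\ L/2-w/2+wt+1,\ L/2+w/2+wt,\ L/2+w/2+wt+1\}$. Horizontal boundary checks are the $S(w,t)$ with $n=a$ on the top row (position $j\mapsto(1,j)$); vertical boundary checks are the $S(w,t)$ with $n=b$ on the leftmost column (position $i\mapsto(i,1)$). $uRM(m)$ is the set of $x\in\mathbb{F}_2^{2^m}$ whose sum over every check is $0$. *)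

From HB Require Import structures.
From mathcomp Require Import all_boot all_order all_algebra.
Set Implicit Arguments. Unset Strict Implicit. Unset Printing Implicit Defensive.
Import GRing.Theory.
Local Open Scope ring_scope.

(* a = ceil(m/2), b = floor(m/2) *)
Definition acol (m : nat) : nat := uphalf m.
Definition brow (m : nat) : nat := m./2.
Definition nrows (m : nat) : nat := (2 ^ brow m)%N.
Definition ncols (m : nat) : nat := (2 ^ acol m)%N.

(* Bits are indexed by grid positions (i,j), 1 <= i <= 2^b, 1 <= j <= 2^a,
   flattened (row-major, via mxvec) into a row vector of length 2^b * 2^a. *)
Definition ind (m : nat) (P : nat -> nat -> bool) : 'rV['F_2]_(nrows m * ncols m) :=
  mxvec (\matrix_(i < nrows m, j < ncols m) (P i.+1 j.+1)%:R).

Definition bulkP (i j : nat) : nat -> nat -> bool :=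
  fun x y => ((x == i) || (x == i.+1)) && ((y == j) || (y == j.+1)).

Definition Sset (n s : nat) (t : int) : pred int :=
  let L := (2 ^ n)%N in let w := (2 ^ s)%N in
  let c := (L %/ 2)%:Z - (w %/ 2)%:Z + w%:Z * t in
  let d := (L %/ 2)%:Z + (w %/ 2)%:Z + w%:Z * t in
  fun p => [|| p == c, p == c + 1, p == d | p == d + 1].

Definition trange (n s : nat) : seq int :=
  let K := ((2 ^ n) %/ (2 * 2 ^ s))%N in
  [seq (k%:Z - (K%:Z - 1)) | k <- iota 0 (2 * K - 1)%N].

Definition horP (m s : nat) (t : int) : nat -> nat -> bool :=
  fun x y => (x == 1)%N && (Sset (acol m) s t y%:Z).
Definition verP (m s : nat) (t : int) : nat -> nat -> bool :=
  fun x y => (y == 1)%N && (Sset (brow m) s t x%:Z).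

Definition bulk_checks (m : nat) : seq 'rV['F_2]_(nrows m * ncols m) :=
  [seq ind m (bulkP i j) | i <- iota 1 (nrows m - 1)%N, j <- iota 1 (ncols m - 1)%N].
Definition hor_checks (m : nat) : seq 'rV['F_2]_(nrows m * ncols m) :=
  [seq ind m (horP m s t) | s <- iota 1 (acol m - 1)%N, t <- trange (acol m) s].
Definition ver_checks (m : nat) : seq 'rV['F_2]_(nrows m * ncols m) :=
  [seq ind m (verP m s t) | s <- iota 1 (brow m - 1)%N, t <- trange (brow m) s].

Definition checks (m : nat) : seq 'rV['F_2]_(nrows m * ncols m) :=
  bulk_checks m ++ hor_checks m ++ ver_checks m.

Definition checkmx (m : nat) : 'M['F_2]_(size (checks m), nrows m * ncols m) :=
  \matrix_(k < size (checks m)) (checks m)`_k.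

(* uRM(m) = { x | x *m checkmx^T = 0 }, i.e. the sum of x over every check is 0;
   represented as the (row space of the) kernel matrix. *)
Definition uRM (m : nat) : 'M['F_2]_(nrows m * ncols m) := kermx (checkmx m)^T.

From mathcomp Require Import all_boot all_order all_algebra.
From mathcomp Require Import zify.
Set Implicit Arguments. Unset Strict Implicit. Unset Printing Implicit Defensive.
Import GRing.Theory.
Local Open Scope ring_scope.

(* Every check has a greatest cell for the componentwise order on the grid:
   (i+1, j+1) for the bulk check at (i, j), (1, L/2 + w/2 + wt + 1) for the
   horizontal check S(w, t) and its mirror image for the vertical one.  These
   cells are pairwise distinct, because the 2-adic valuation of
   L/2 + w/2 + wt = 2^(s-1) * odd recovers s and then t.  Ordering the checks
   by their greatest cells puts them in echelon form, so they are independent.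
   There are (2^b - 1)(2^a - 1) bulk checks and 2^n - n - 1 boundary checks on
   a line of length 2^n, which add up to 2^m - m - 1; the kernel therefore has
   dimension m + 1. *)

Lemma free_map_pivot (F : fieldType) (T : eqType) (n : nat) (v : T -> 'rV[F]_n)
    (piv : T -> 'I_n) (w : 'I_n -> nat) (P : seq T) :
  (forall x, x \in P -> v x 0 (piv x) != 0) ->
  (forall x c, x \in P -> v x 0 c != 0 -> c = piv x \/ (w c < w (piv x))%N) ->
  uniq (map piv P) -> free (map v P).
Proof.
move=> v_piv v_supp uniq_piv.
apply/(@freeP _ _ _ (in_tuple (map v P))) => /= k sum0 i.
have x0 : T by case: P i {v_piv v_supp uniq_piv k sum0} => [[]|x].
have ltP (o : 'I_(size (map v P))) : (o < size P)%N by rewrite -(size_map v).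
have nthv (o : 'I_(size (map v P))) : (map v P)`_o = v (nth x0 P o).
  by rewrite (nth_map x0).
apply/eqP; apply: contraT => ki0.
have [j kj jmax] := @arg_maxnP _ _ (fun j => k j != 0) (fun j => w (piv (nth x0 P j))) ki0.
set xj := nth x0 P j in jmax.
move/rowP/(_ (piv xj)): sum0; rewrite summxE (bigD1 j) //= big1 => [|l lj].
  rewrite !mxE nthv addr0 => /eqP; rewrite mulf_eq0 (negPf kj) /=.
  by rewrite (negPf (v_piv _ (mem_nth x0 (ltP j)))).
rewrite !mxE nthv; have [->|kl] := eqVneq (k l) 0; first by rewrite mul0r.
have [->|vl] := eqVneq (v (nth x0 P l) 0 (piv xj)) 0; first by rewrite mulr0.
case: (v_supp _ _ (mem_nth x0 (ltP l)) vl) => [pivE|]; last by have := jmax l kl; lia.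
have ltpiv (o : 'I_(size (map v P))) : (o < size (map piv P))%N.
  by rewrite [size (map piv _)]size_map ltP.
move: lj; rewrite -(inj_eq val_inj) -(nth_uniq (piv x0) (ltpiv l) (ltpiv j) uniq_piv).
by rewrite !(nth_map x0) ?ltP // pivE eqxx.
Qed.

Definition grid_indicator (F : fieldType) (R C : nat) (f : nat -> nat -> bool) :
  'rV[F]_(R * C) :=
  mxvec (\matrix_(i < R, j < C) (f i.+1 j.+1)%:R).

Definition greatest_cell (f : nat -> nat -> bool) (c : nat * nat) : Prop :=
  f c.1 c.2 /\ forall i j, f i j -> (i <= c.1)%N /\ (j <= c.2)%N.

Lemma free_grid_indicator (F : fieldType) (R C : nat) (T : eqType)
    (f : T -> nat -> nat -> bool) (c : T -> nat * nat) (P : seq T) :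
  (forall x, x \in P ->
     [/\ 0 < (c x).1 <= R, 0 < (c x).2 <= C & greatest_cell (f x) (c x)])%N ->
  uniq (map c P) -> free [seq grid_indicator F R C (f x) | x <- P].
Proof.
case: P => [|x0 P] c_cell uniq_c; first exact: nil_free.
case: R C c_cell => [|R] [|C] c_cell; try by case: (c_cell x0 (mem_head _ _)); lia.
set Q := x0 :: P in c_cell uniq_c *.
pose piv x : 'I_(R.+1 * C.+1) := mxvec_index (inord (c x).1.-1) (inord (c x).2.-1).
(* i + j increases strictly along the componentwise order. *)
pose w k := mxvec (\matrix_(i < R.+1, j < C.+1) (i + j)%N) 0 k.
have pivE x : x \in Q -> [/\ (inord (c x).1.-1 : 'I_R.+1).+1 = (c x).1 &
                            (inord (c x).2.-1 : 'I_C.+1).+1 = (c x).2]%N.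
  by case/c_cell=> /andP[a0 aR] /andP[b0 bC] _; rewrite !inordK; lia.
apply: (free_map_pivot (piv := piv) (w := w)) => [x xQ | x k xQ | ].
- have [_ _ [fc _]] := c_cell x xQ; have [ea eb] := pivE x xQ.
  by rewrite /grid_indicator mxvecE mxE ea eb fc oner_neq0.
- case/mxvec_indexP: k => i j; rewrite /grid_indicator mxvecE mxE.
  have [_ _ [_ dom]] := c_cell x xQ; have [ea eb] := pivE x xQ.
  case fij: (f x i.+1 j.+1); rewrite ?eqxx // => _.
  have [le_i le_j] := dom _ _ fij.
  have [/andP[/eqP ei /eqP ej]|not_corner] := boolP ((i.+1 == (c x).1) && (j.+1 == (c x).2)).
    by left; congr mxvec_index; apply/val_inj; apply/eqP; rewrite -eqSS ?ei ?ej ?ea ?eb.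
  by right; rewrite /w !mxvecE !mxE; lia.
- pose g (ab : nat * nat) : 'I_(R.+1 * C.+1) := mxvec_index (inord ab.1.-1) (inord ab.2.-1).
  rewrite (map_comp g c) map_inj_in_uniq // => _ _ /mapP[x xQ ->] /mapP[y yQ ->].
  move/cast_ord_inj/enum_rank_inj.
  move=> [/(congr1 (S \o val)) /= e1 /(congr1 (S \o val)) /= e2].
  have [ex1 ex2] := pivE x xQ; have [ey1 ey2] := pivE y yQ.
  by rewrite [c x]surjective_pairing [c y]surjective_pairing -ex1 -ex2 -ey1 -ey2 e1 e2.
Qed.

Definition tbound (n s : nat) : nat := (2 ^ n %/ (2 * 2 ^ s))%N.

Definition tshift (n s k : nat) : int := k%:Z - ((tbound n s)%:Z - 1).

Lemma trangeE n s : trange n s = map (tshift n s) (iota 0 (2 * tbound n s - 1)).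
Proof. by []. Qed.

Lemma tbound_exp n s : (s < n)%N -> tbound n s = (2 ^ (n - s.+1))%N.
Proof. by move=> lt_sn; rewrite /tbound -expnS -expnB. Qed.

(* The largest position L/2 + w/2 + wt + 1 of S(w, t), for t = tshift n s k. *)
Definition Sset_max (s k : nat) : nat := (2 ^ s.-1 * (2 * k + 3)).+1.

Lemma Sset_shiftE n s k y : (0 < s < n)%N ->
  Sset n s (tshift n s k) y%:Z =
  [|| y == 2 ^ s.-1 * (2 * k + 1), y == (2 ^ s.-1 * (2 * k + 1)).+1,
      y == 2 ^ s.-1 * (2 * k + 3) | y == (2 ^ s.-1 * (2 * k + 3)).+1]%N.
Proof.
case: s => [|s] // /andP[_ lt_sn]; rewrite /Sset /tshift tbound_exp //=.
have -> : (2 ^ n %/ 2 = 2 ^ s * 2 ^ (n - s.+2) * 2)%N.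
  have {1}-> : n = (s + (n - s.+2)).+2 by lia.
  by rewrite expnS mulKn // expnSr expnD.
rewrite expnS mulKn //.
move: (2 ^ s)%N (2 ^ (n - s.+2))%N => p q.
have -> : (p * q * 2)%:Z - p%:Z + (2 * p)%:Z * (k%:Z - (q%:Z - 1))
          = (p * (2 * k + 1))%N%:Z by lia.
have -> : (p * q * 2)%:Z + p%:Z + (2 * p)%:Z * (k%:Z - (q%:Z - 1))
          = (p * (2 * k + 3))%N%:Z by lia.
by rewrite -!PoszD !eqz_nat !addn1.
Qed.

Lemma Sset_max_greatest n s k : (0 < s < n)%N ->
  Sset n s (tshift n s k) (Sset_max s k)%:Z /\
  forall y, Sset n s (tshift n s k) y%:Z -> (y <= Sset_max s k)%N.
Proof.
move=> s_range; rewrite /Sset_max Sset_shiftE // eqxx !orbT; split=> // y.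
by rewrite Sset_shiftE // => /or4P[] /eqP ->; nia.
Qed.

Lemma Sset_max_gt1 s k : (1 < Sset_max s k)%N.
Proof. by rewrite ltnS muln_gt0 expn_gt0 addn_gt0 orbT. Qed.

Lemma Sset_max_le n s k : (0 < s < n)%N -> (k < 2 * tbound n s - 1)%N ->
  (Sset_max s k <= 2 ^ n)%N.
Proof.
case/andP=> s_gt0 lt_sn; rewrite tbound_exp // /Sset_max => lt_k.
have -> : (2 ^ n = 2 ^ s.-1 * (4 * 2 ^ (n - s.+1)))%N.
  by rewrite mulnA -(expnD 2 s.-1 2) -expnD; congr (expn 2); lia.
have := expn_gt0 2 s.-1; have := expn_gt0 2 (n - s.+1); nia.
Qed.

Lemma pow2_odd_inj a b k l :
  (2 ^ a * (2 * k + 1) = 2 ^ b * (2 * l + 1))%N -> a = b /\ k = l.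
Proof.
have val2 c j : logn 2 (2 ^ c * (2 * j + 1)) = c.
  by rewrite mulnC logn_Gauss ?pfactorK // coprime2n oddD oddM.
move=> E; have ab : a = b by rewrite -(val2 a k) E val2.
by split=> //; move/eqP: E; rewrite ab eqn_pmul2l ?expn_gt0 //; lia.
Qed.

Lemma Sset_max_inj s k s' k' : (0 < s)%N -> (0 < s')%N ->
  Sset_max s k = Sset_max s' k' -> s = s' /\ k = k'.
Proof.
rewrite /Sset_max => s_gt0 s'_gt0 [].
have odd_form j : (2 * j + 3 = 2 * j.+1 + 1)%N by lia.
by rewrite !odd_form => /pow2_odd_inj [? ?]; split; lia.
Qed.

Lemma size_trange n s : (s < n)%N -> size (trange n s) = (2 ^ (n - s) - 1)%N.
Proof.
move=> lt_sn; rewrite trangeE size_map size_iota tbound_exp // -expnS.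
by congr (2 ^ _ - 1)%N; lia.
Qed.

Lemma sum_pow2_sub1 n :
  (sumn [seq 2 ^ (n - s) - 1 | s <- iota 1 (n - 1)] + n + 1 = 2 ^ n)%N.
Proof.
elim: n => [//|[|n] IH] //; rewrite !subn1 /= in IH *.
rewrite (iotaDl 1 1) -map_comp.
under eq_map => s do rewrite /= add1n subSS.
have := IH; have := expn_gt0 2 n.+1; rewrite subSS subn0 (expnS 2 n.+1); lia.
Qed.

Lemma sum_size_trange n :
  (sumn [seq size (trange n s) | s <- iota 1 (n - 1)] + n + 1 = 2 ^ n)%N.
Proof.
rewrite -[RHS]sum_pow2_sub1; congr (sumn _ + _ + _)%N.
by apply/eq_in_map => s; rewrite mem_iota => ?; apply: size_trange; lia.
Qed.

Definition check_label : Type := ((nat * nat) + ((nat * nat) + (nat * nat)))%type.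

Definition check_pred (m : nat) (x : check_label) : nat -> nat -> bool :=
  match x with
  | inl (i, j) => bulkP i j
  | inr (inl (s, k)) => horP m s (tshift (acol m) s k)
  | inr (inr (s, k)) => verP m s (tshift (brow m) s k)
  end.

Definition check_corner (x : check_label) : nat * nat :=
  match x with
  | inl (i, j) => (i.+1, j.+1)
  | inr (inl (s, k)) => (1, Sset_max s k)
  | inr (inr (s, k)) => (Sset_max s k, 1)
  end%N.

Definition boundary_labels (n : nat) : seq (nat * nat) :=
  [seq (s, k) | s <- iota 1 (n - 1), k <- iota 0 (2 * tbound n s - 1)].

Definition check_labels (m : nat) : seq check_label :=
  [seq inl (i, j) | i <- iota 1 (nrows m - 1), j <- iota 1 (ncols m - 1)] ++
  [seq inr (inl sk) | sk <- boundary_labels (acol m)] ++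
  [seq inr (inr sk) | sk <- boundary_labels (brow m)].

Lemma checksE m :
  checks m =
  [seq grid_indicator 'F_2 (nrows m) (ncols m) (check_pred m x) | x <- check_labels m].
Proof.
rewrite /checks /check_labels !map_cat -!map_comp map_allpairs.
congr (_ ++ _ ++ _).
all: by rewrite /hor_checks /ver_checks /boundary_labels /trange map_allpairs allpairs_mapr.
Qed.

Definition valid_label (m : nat) (x : check_label) : Prop :=
  match x with
  | inl (i, j) => 0 < i < nrows m /\ 0 < j < ncols m
  | inr (inl (s, k)) => 0 < s < acol m /\ k < 2 * tbound (acol m) s - 1
  | inr (inr (s, k)) => 0 < s < brow m /\ k < 2 * tbound (brow m) s - 1
  end%N.

Lemma boundary_labelsP n s k : (s, k) \in boundary_labels n ->
  (0 < s < n)%N /\ (k < 2 * tbound n s - 1)%N.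
Proof.
case/allpairsPdep => s' [k'] [] /[!mem_iota] /andP[? ?] /andP[_ ?] [-> ->]; split; lia.
Qed.

Lemma check_labelsP m x : x \in check_labels m -> valid_label m x.
Proof.
rewrite !mem_cat => /or3P[/allpairsP[[i j] [] /[!mem_iota] /= ? ? ->] | | ].
- split; lia.
- by case/mapP => -[s k] /boundary_labelsP ? ->.
- by case/mapP => -[s k] /boundary_labelsP ? ->.
Qed.

Lemma check_corner_greatest m x : valid_label m x ->
  [/\ 0 < (check_corner x).1 <= nrows m, 0 < (check_corner x).2 <= ncols m
    & greatest_cell (check_pred m x) (check_corner x)]%N.
Proof.
have R_gt0 : (0 < nrows m)%N by rewrite expn_gt0.
have C_gt0 : (0 < ncols m)%N by rewrite expn_gt0.
case: x => [[i j]|[[s k]|[s k]]] /= [range1 range2].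
- split; [lia | lia | split; first by rewrite /bulkP !eqxx !orbT].
  by move=> x y /andP[/orP[]/eqP-> /orP[]/eqP->]; split=> /=; lia.
- have [top le_top] := Sset_max_greatest k range1.
  have := Sset_max_gt1 s k; have := Sset_max_le range1 range2.
  split; [lia | rewrite /ncols; lia | split; first by rewrite /horP eqxx].
  by move=> x y /andP[/eqP-> /le_top].
- have [top le_top] := Sset_max_greatest k range1.
  have := Sset_max_gt1 s k; have := Sset_max_le range1 range2.
  split; [rewrite /nrows; lia | lia | split; first by rewrite /verP eqxx].
  by move=> x y /andP[/eqP-> /le_top].
Qed.

Lemma check_corner_inj m : {in check_labels m &, injective check_corner}.
Proof.
move=> x y /check_labelsP vx /check_labelsP vy.
case: x y vx vy => [[i j]|[[s k]|[s k]]] [[i' j']|[[s' k']|[s' k']]] /=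
  [r1 r2] [r1' r2'] /pair_equal_spec[e1 e2]; first by case: e1 e2 => [->] [->].
all: try by exfalso; lia.
- case/andP: r1 r1' => s_gt0 _ /andP[s'_gt0 _].
  by case: (Sset_max_inj s_gt0 s'_gt0 e2) => -> ->.
- by exfalso; have := Sset_max_gt1 s' k'; lia.
- by exfalso; have := Sset_max_gt1 s k; lia.
- case/andP: r1 r1' => s_gt0 _ /andP[s'_gt0 _].
  by case: (Sset_max_inj s_gt0 s'_gt0 e1) => -> ->.
Qed.

Lemma uniq_boundary_labels n : uniq (boundary_labels n).
Proof.
apply: allpairs_uniq_dep => [|s _|[s k] [s' k'] _ _ [-> ->]] //; exact: iota_uniq.
Qed.

Lemma uniq_check_labels m : uniq (check_labels m).
Proof.
rewrite !cat_uniq allpairs_uniq ?iota_uniq //; last by move=> [? ?] [? ?] _ _ [-> ->].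
rewrite !map_inj_uniq ?uniq_boundary_labels //; try by move=> ? ? [].
rewrite /= andbT; apply/andP; split; apply/hasPn => z.
  by rewrite mem_cat => /orP[] /mapP[? _ ->]; apply/allpairsP => -[? [_ _]].
by case/mapP => ? _ ->; apply/mapP => -[].
Qed.

Lemma acol_add_brow m : (acol m + brow m = m)%N.
Proof. by rewrite /acol /brow uphalf_half -addnA addnn odd_double_half. Qed.

Lemma grid_size m : (nrows m * ncols m = 2 ^ m)%N.
Proof. by rewrite /nrows /ncols -expnD addnC acol_add_brow. Qed.

Lemma size_checks m : size (checks m) = (2 ^ m - m - 1)%N.
Proof.
rewrite /checks !size_cat size_allpairs !size_iota !size_allpairs_dep -grid_size.
have := sum_size_trange (acol m); have := sum_size_trange (brow m).
have := acol_add_brow m; rewrite /nrows /ncols.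
have := expn_gt0 2 (acol m); have := expn_gt0 2 (brow m).
move: (2 ^ acol m)%N (2 ^ brow m)%N => C R; nia.
Qed.

Lemma free_row_free (F : fieldType) (n : nat) (s : seq 'rV[F]_n) :
  free s -> row_free (\matrix_(k < size s) s`_k).
Proof.
move=> /(@freeP _ _ _ (in_tuple s)) free_s.
apply: inj_row_free => v; rewrite mulmx_sum_row => v0.
apply/rowP => i; rewrite mxE; apply: (free_s (v 0)).
by rewrite -[RHS]v0; apply: eq_bigr => j _; rewrite rowK.
Qed.

Theorem lemma1 (m : nat) (hm : (2 <= m)%N) :
  free (checks m) /\ size (checks m) = (2 ^ m - m - 1)%N /\
  (nrows m * ncols m = 2 ^ m)%N /\ \rank (uRM m) = m.+1.
Proof.
have free_checks : free (checks m).
  rewrite checksE; apply: (@free_grid_indicator _ _ _ _ _ check_corner).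
    by move=> x /check_labelsP /check_corner_greatest.
  by rewrite map_inj_in_uniq ?uniq_check_labels //; exact: check_corner_inj.
split=> //; split; first exact: size_checks.
split; first exact: grid_size.
rewrite /uRM mxrank_ker mxrank_tr (eqP (free_row_free free_checks)) size_checks grid_size.
have := ltn_expl m (isT : (1 < 2)%N); lia.
Qed.
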